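(* (Soundness) Let $\mathfrak M=(\mathfrak T,\mathcal V)$ be a TFL model and $\phi$ a TFL formula in positive normal form, and let $H_0=(\mathfrak X(s_0),t_\epsilon)$ be the initial process. If $H_0\notin[\![\phi]\!]^{\mathfrak T}_{\mathcal V}$, then Adam has a winning strategy in the model-checking game $\mathcal G(H_0,\phi)$.
   Context: Systems: $\mathfrak T=(S,s_0,T,I,\Sigma)$, a transition system with independence (states $S$, initial $s_0$, labels $\Sigma$, transitions $T\subseteq S\times\Sigma\times S$, irreflexive symmetric independence $I\subseteq T\times T$ satisfying the standard TSI axioms), image-finite. For $t=(s,a,s')$: $\sigma(t)=s,\tau(t)=s',\delta(t)=a$. $t\otimes t'$ iff $\sigma(t)=\sigma(t')\wedge tIt'$; $t\ominus t'$ iff $\tau(t)=\sigma(t')\wedge tIt'$; $t\le t'$ iff $\tau(t)=\sigma(t')\wedge\neg tIt'$. $\mathfrak X(s)$ = transitions with source $s$; conflict-free set = set with common source, pairwise $\otimes$; support sets = the $\mathfrak X(s)$ and non-empty conflict-free sets; $M\sqsubseteq R$ iff $M\subseteq R$ and no $t\in R\setminus M$ has $t\otimes t'$ for all $t'\in M$; $\mathcal X$ = all $\mathfrak X(s)$ and all support sets $M\sqsubseteq\mathfrak X(s)$; $\mathfrak A=T\cup\{t_\epsilon\}$ with fresh $t_\epsilon$, $\tau(t_\epsilon)=s_0$, $t_\epsilon\le t$ whenever $\sigma(t)=s_0$, never $t_\epsilon\ominus t$; processes $\mathfrak S=\mathcal X\times\mathfrak A$. TFL: formulas $\phi::=Z\mid\neg\phi\mid\phi\wedge\phi\mid\langle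 a\rangle_c\phi\mid\langle a\rangle_{nc}\phi\mid\langle\otimes\rangle\phi\mid\mu Z.\phi$ (free occurrences of $Z$ in $\mu Z.\phi$ under an even number of negations), with duals $\vee$, $[a]_c=\neg\langle a\rangle_c\neg$, $[a]_{nc}$, $[\otimes]=\neg\langle\otimes\rangle\neg$, $\nu Z.\phi=\neg\mu Z.\neg\phi[\neg Z/Z]$. A model is $(\mathfrak T,\mathcal V)$ with $\mathcal V:\mathrm{Var}\to2^{\mathfrak S}$. Semantics in $2^{\mathfrak S}$: $[\![Z]\!]=\mathcal V(Z)$, $\neg$ complement, $\wedge$ intersection, $[\![\langle a\rangle_c\phi]\!]=\{(R,t):\exists r\in R.\ \delta(r)=a,\ t\le r,\ (\mathfrak X(\tau(r)),r)\in[\![\phi]\!]\}$, $\langle a\rangle_{nc}$ likewise with $t\ominus r$, $[\![\langle\otimes\rangle\phi]\!]=\{(R,t):\exists M\in\mathcal X.\ M\sqsubseteq R,\ (M,t)\in[\![\phi]\!]\}$, $[\![\mu Z.\phi]\!]_{\mathcal V}=\bigcap\{Q\subseteq\mathfrak S:[\![\phi]\!]_{\mathcal V[Z:=Q]}\subseteq Q\}$. Positive normal form: negation only on variables, no two binders bind the same variable. $Sub(\phi)$ is the set of subformulas. Model-checking game $\mathcal G(H_0,\phi)$ between Eve and Adam: configurations $H\vdash\psi$ with $H\in\mathfrak S$, $\psi\in Sub(\phi)$; start $H_0\vdash\phi$. Rules: $H\vdash\mu Z.\psi$ or $H\vdash\nu Z.\psi$ moves to $H\vdash Z$; $H\vdash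 Z$ with $Z$ bound by $\mu Z.\psi$ or $\nu Z.\psi$ moves to $H\vdash\psi$; at $H\vdash\psi_0\vee\psi_1$ Eve (at $\wedge$, Adam) chooses $H\vdash\psi_i$; at $(R,t)\vdash\langle a\rangle_c\psi$ Eve (at $[a]_c\psi$, Adam) chooses $r\in R$ with $\delta(r)=a$, $t\le r$, moving to $(\mathfrak X(\tau(r)),r)\vdash\psi$; same for $\langle a\rangle_{nc}$/$[a]_{nc}$ with $t\ominus r$; at $(R,t)\vdash\langle\otimes\rangle\psi$ Eve (at $[\otimes]\psi$, Adam) chooses $M\in\mathcal X$ with $M\sqsubseteq R$, moving to $(M,t)\vdash\psi$. Adam wins a play iff it ends at $H\vdash Z$ ($Z$ free) with $H\notin\mathcal V(Z)$, or at a diamond configuration ($\langle a\rangle_c$, $\langle a\rangle_{nc}$, $\langle\otimes\rangle$) with no available choice, or is infinite and the syntactically outermost variable occurring infinitely often is bound by a $\mu$; Eve wins dually (ends at $H\vdash Z$ with $H\in\mathcal V(Z)$, at a box configuration with no available choice, or infinite with the outermost infinitely-often variable bound by a $\nu$). A player has a winning strategy if she/he can guarantee winning every play. *)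

From Stdlib Require Import List Arith Relations.
Import ListNotations.
Set Implicit Arguments.

Section TSI.
Context {S L : Type}.
Definition trans := (S * L * S)%type.
Definition src (t : trans) : S := fst (fst t).
Definition lbl (t : trans) : L := snd (fst t).
Definition tgt (t : trans) : S := snd t.

Variables (s0 : S) (T : trans -> Prop) (I : trans -> trans -> Prop).

Definition tsi_prec (t t' : trans) : Prop :=
  lbl t = lbl t' /\
  exists b : L, I t (src t, b, src t') /\ I t (tgt t, b, tgt t') /\ I (src t, b, src t') t'.

Definition tsi_sim : trans -> trans -> Prop := clos_refl_sym_trans trans tsi_prec.

(* The standard TSI axioms (Winskel--Nielsen), plus I irreflexive, symmetric, I ⊆ T×T *)
Definition is_TSI : Prop :=
  (forall t t', I t t' -> T t /\ T t') /\
  (forall t, ~ I t t) /\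
  (forall t t', I t t' -> I t' t) /\
  (forall s a s1 s2, tsi_sim (s, a, s1) (s, a, s2) -> s1 = s2) /\
  (forall s a s1 b s2, I (s, a, s1) (s, b, s2) ->
     exists u, I (s, a, s1) (s1, b, u) /\ I (s, b, s2) (s2, a, u)) /\
  (forall s a s1 b u, I (s, a, s1) (s1, b, u) ->
     exists s2, I (s, a, s1) (s, b, s2) /\ I (s, b, s2) (s2, a, u)) /\
  (forall t t' w, (tsi_prec t t' \/ tsi_prec t' t) -> I t' w -> I t w).

Definition image_finite : Prop :=
  forall (s : S) (a : L), exists l : list S, forall s', T (s, a, s') -> In s' l.

Definition otimes (t t' : trans) : Prop := src t = src t' /\ I t t'.

(* Elements of A = T ∪ {t_eps}: [None] is t_eps, [Some t] is t ∈ T *)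
Definition atrans := option trans.
Definition in_A (t : atrans) : Prop :=
  match t with None => True | Some t => T t end.

(* t <= r  (tau(t_eps) = s0, t_eps never independent) *)
Definition causal (t : atrans) (r : trans) : Prop :=
  match t with
  | None => src r = s0
  | Some t => tgt t = src r /\ ~ I t r
  end.

Definition concur (t : atrans) (r : trans) : Prop :=
  match t with
  | None => False
  | Some t => tgt t = src r /\ I t r
  end.

Definition tset := trans -> Prop.

Definition Xs (s : S) : tset := fun t => T t /\ src t = s.

Definition set_eq (M R : tset) : Prop := forall t, M t <-> R t.

Definition conflict_free (M : tset) : Prop :=
  (exists s, forall t, M t -> T t /\ src t = s) /\
  (forall t t', M t -> M t' -> t <> t' -> otimes t t').

Definition support_set (M : tset) : Prop :=
  (exists s, set_eq M (Xs s)) \/ (conflict_free M /\ exists t, M t).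

Definition sqsub (M R : tset) : Prop :=
  (forall t, M t -> R t) /\
  ~ (exists t, R t /\ ~ M t /\ forall t', M t' -> otimes t t').

Definition in_calX (M : tset) : Prop :=
  (exists s, set_eq M (Xs s)) \/ (support_set M /\ exists s, sqsub M (Xs s)).

Definition process := (tset * atrans)%type.
Definition is_proc (H : process) : Prop := in_calX (fst H) /\ in_A (snd H).

Definition H0 : process := (Xs s0, None).

End TSI.

Definition var := nat.

Inductive form (L : Type) : Type :=
| FVar  : var -> form L
| FNeg  : form L -> form L
| FAnd  : form L -> form L -> form L
| FOr   : form L -> form L -> form L
| FDiaC : L -> form L -> form L
| FBoxC : L -> form L -> form L
| FDiaNC : L -> form L -> form L
| FBoxNC : L -> form L -> form L
| FDiaO : form L -> form L
| FBoxO : form L -> form L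
| FMu   : var -> form L -> form L
| FNu   : var -> form L -> form L.
Arguments FVar {L}.

(* Sub phi psi : psi is a subformula of phi *)
Inductive Sub {L : Type} : form L -> form L -> Prop :=
| Sub_refl : forall f, Sub f f
| Sub_Neg : forall f g, Sub f g -> Sub (FNeg f) g
| Sub_AndL : forall f1 f2 g, Sub f1 g -> Sub (FAnd f1 f2) g
| Sub_AndR : forall f1 f2 g, Sub f2 g -> Sub (FAnd f1 f2) g
| Sub_OrL : forall f1 f2 g, Sub f1 g -> Sub (FOr f1 f2) g
| Sub_OrR : forall f1 f2 g, Sub f2 g -> Sub (FOr f1 f2) g
| Sub_DiaC : forall a f g, Sub f g -> Sub (FDiaC a f) g
| Sub_BoxC : forall a f g, Sub f g -> Sub (FBoxC a f) g
| Sub_DiaNC : forall a f g, Sub f g -> Sub (FDiaNC a f) g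
| Sub_BoxNC : forall a f g, Sub f g -> Sub (FBoxNC a f) g
| Sub_DiaO : forall f g, Sub f g -> Sub (FDiaO f) g
| Sub_BoxO : forall f g, Sub f g -> Sub (FBoxO f) g
| Sub_Mu : forall z f g, Sub f g -> Sub (FMu z f) g
| Sub_Nu : forall z f g, Sub f g -> Sub (FNu z f) g.

(* occ z p f : z occurs free in f under a number of negations of parity p
   (p = true : odd).  The derived connectives (\/, boxes, nu) contribute an
   even number of negations, as in their definitions. *)
Inductive occ {L : Type} (z : var) : bool -> form L -> Prop :=
| occ_Var : occ z false (FVar z)
| occ_Neg : forall p f, occ z p f -> occ z (negb p) (FNeg f)
| occ_AndL : forall p f1 f2, occ z p f1 -> occ z p (FAnd f1 f2)
| occ_AndR : forall p f1 f2, occ z p f2 -> occ z p (FAnd f1 f2)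
| occ_OrL : forall p f1 f2, occ z p f1 -> occ z p (FOr f1 f2)
| occ_OrR : forall p f1 f2, occ z p f2 -> occ z p (FOr f1 f2)
| occ_DiaC : forall p a f, occ z p f -> occ z p (FDiaC a f)
| occ_BoxC : forall p a f, occ z p f -> occ z p (FBoxC a f)
| occ_DiaNC : forall p a f, occ z p f -> occ z p (FDiaNC a f)
| occ_BoxNC : forall p a f, occ z p f -> occ z p (FBoxNC a f)
| occ_DiaO : forall p f, occ z p f -> occ z p (FDiaO f)
| occ_BoxO : forall p f, occ z p f -> occ z p (FBoxO f)
| occ_Mu : forall p y f, y <> z -> occ z p f -> occ z p (FMu y f)
| occ_Nu : forall p y f, y <> z -> occ z p f -> occ z p (FNu y f).

Definition TFL_formula {L : Type} (phi : form L) : Prop :=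
  forall z psi, (Sub phi (FMu z psi) \/ Sub phi (FNu z psi)) -> ~ occ z true psi.

Fixpoint binders {L : Type} (f : form L) : list var :=
  match f with
  | FVar _ => []
  | FNeg g | FDiaC _ g | FBoxC _ g | FDiaNC _ g | FBoxNC _ g
  | FDiaO g | FBoxO g => binders g
  | FAnd g h | FOr g h => binders g ++ binders h
  | FMu z g | FNu z g => z :: binders g
  end.

Definition PNF {L : Type} (phi : form L) : Prop :=
  (forall g, Sub phi (FNeg g) -> exists z, g = FVar z) /\
  NoDup (binders phi) /\
  (forall z p, occ z p phi -> ~ In z (binders phi)).

Section Semantics.
Context {S L : Type} (s0 : S) (T : @trans S L -> Prop) (I : @trans S L -> @trans S L -> Prop).

Definition pset := @process S L -> Prop.
Definition valuation := var -> pset.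

Definition upd (V : valuation) (z : var) (Q : pset) : valuation :=
  fun y => if Nat.eqb y z then Q else V y.

Definition pcompl (X : pset) : pset := fun H => is_proc T I H /\ ~ X H.

Definition dia_c (a : L) (X : pset) : pset := fun H =>
  is_proc T I H /\
  exists r, fst H r /\ lbl r = a /\ causal s0 I (snd H) r /\ X (Xs T (tgt r), Some r).

Definition dia_nc (a : L) (X : pset) : pset := fun H =>
  is_proc T I H /\
  exists r, fst H r /\ lbl r = a /\ concur I (snd H) r /\ X (Xs T (tgt r), Some r).

Definition dia_o (X : pset) : pset := fun H =>
  is_proc T I H /\
  exists M, in_calX T I M /\ sqsub I M (fst H) /\ X (M, snd H).

Definition lfp (F : pset -> pset) : pset := fun H =>
  is_proc T I H /\
  forall Q : pset, (forall H', Q H' -> is_proc T I H') ->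
                   (forall H', F Q H' -> Q H') -> Q H.

Fixpoint sem (f : form L) (V : valuation) : pset :=
  match f with
  | FVar z => V z
  | FNeg g => pcompl (sem g V)
  | FAnd g h => fun H => sem g V H /\ sem h V H
  | FOr g h => pcompl (fun H => pcompl (sem g V) H /\ pcompl (sem h V) H)
  | FDiaC a g => dia_c a (sem g V)
  | FBoxC a g => pcompl (dia_c a (pcompl (sem g V)))
  | FDiaNC a g => dia_nc a (sem g V)
  | FBoxNC a g => pcompl (dia_nc a (pcompl (sem g V)))
  | FDiaO g => dia_o (sem g V)
  | FBoxO g => pcompl (dia_o (pcompl (sem g V)))
  | FMu z g => lfp (fun Q => sem g (upd V z Q))
  | FNu z g => (* nu Z.phi = ~ mu Z. ~ phi[~Z/Z] *)
      pcompl (lfp (fun Q => pcompl (sem g (upd V z (pcompl Q)))))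
  end.

Definition valuation_ok (V : valuation) : Prop :=
  forall z H, V z H -> is_proc T I H.

End Semantics.

Section Game.
Context {C : Type}
  (mv : C -> C -> Prop)
  (adam : C -> Prop)                 (* positions where Adam chooses *)
  (adam_end : C -> Prop)             (* Adam wins a finite play ending here *)
  (adam_inf : (nat -> C) -> Prop).   (* Adam wins this infinite play *)

(* a strategy for Adam maps a (non-empty) history, in forward order, to a choice *)
Definition strategy := list C -> C.

Definition stuck (c : C) : Prop := ~ exists c', mv c c'.

Definition legal (sg : strategy) : Prop :=
  forall h c, adam c -> (exists c', mv c c') -> mv c (sg (h ++ [c])).

Definition consistent (sg : strategy) (c0 : C) (h : list C) : Prop :=
  nth_error h 0 = Some c0 /\
  forall i c c', nth_error h i = Some c -> nth_error h (S i) = Some c' ->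
    mv c c' /\ (adam c -> c' = sg (firstn (S i) h)).

Definition adam_wins_with (sg : strategy) (c0 : C) : Prop :=
  (forall h c, consistent sg c0 (h ++ [c]) -> stuck c -> adam_end c) /\
  (forall pi : nat -> C,
     pi 0 = c0 ->
     (forall i, mv (pi i) (pi (S i)) /\
                (adam (pi i) -> pi (S i) = sg (map pi (seq 0 (S i))))) ->
     adam_inf pi).

Definition adam_has_winning_strategy (c0 : C) : Prop :=
  exists sg, legal sg /\ adam_wins_with sg c0.

End Game.

Section MCGame.
Context {S L : Type} (s0 : S) (T : @trans S L -> Prop) (I : @trans S L -> @trans S L -> Prop)
        (V : @valuation S L) (phi : form L).

Definition config := (@process S L * form L)%type.

Inductive mc_move : config -> config -> Prop :=
| mv_mu : forall H z g, mc_move (H, FMu z g) (H, FVar z)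
| mv_nu : forall H z g, mc_move (H, FNu z g) (H, FVar z)
| mv_var : forall H z g, (Sub phi (FMu z g) \/ Sub phi (FNu z g)) ->
    mc_move (H, FVar z) (H, g)
| mv_andL : forall H g h, mc_move (H, FAnd g h) (H, g)
| mv_andR : forall H g h, mc_move (H, FAnd g h) (H, h)
| mv_orL : forall H g h, mc_move (H, FOr g h) (H, g)
| mv_orR : forall H g h, mc_move (H, FOr g h) (H, h)
| mv_diac : forall R t a g r, R r -> lbl r = a -> causal s0 I t r ->
    mc_move ((R, t), FDiaC a g) ((Xs T (tgt r), Some r), g)
| mv_boxc : forall R t a g r, R r -> lbl r = a -> causal s0 I t r ->
    mc_move ((R, t), FBoxC a g) ((Xs T (tgt r), Some r), g)
| mv_dianc : forall R t a g r, R r -> lbl r = a -> concur I t r ->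
    mc_move ((R, t), FDiaNC a g) ((Xs T (tgt r), Some r), g)
| mv_boxnc : forall R t a g r, R r -> lbl r = a -> concur I t r ->
    mc_move ((R, t), FBoxNC a g) ((Xs T (tgt r), Some r), g)
| mv_diao : forall R t g M, in_calX T I M -> sqsub I M R ->
    mc_move ((R, t), FDiaO g) ((M, t), g)
| mv_boxo : forall R t g M, in_calX T I M -> sqsub I M R ->
    mc_move ((R, t), FBoxO g) ((M, t), g).

Definition mc_adam (c : config) : Prop :=
  match snd c with
  | FAnd _ _ | FBoxC _ _ | FBoxNC _ _ | FBoxO _ => True
  | _ => False
  end.

Definition mc_adam_end (c : config) : Prop :=
  match snd c with
  | FVar z => ~ V z (fst c)
  | FNeg (FVar z) => V z (fst c)
  | FDiaC _ _ | FDiaNC _ _ | FDiaO _ => True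
  | _ => False
  end.

Definition inf_often (z : var) (pi : nat -> config) : Prop :=
  forall n, exists m, n <= m /\ snd (pi m) = FVar z.

Definition binder_of (z : var) (chi : form L) : Prop :=
  Sub phi chi /\ exists g, chi = FMu z g \/ chi = FNu z g.

(* Adam wins an infinite play iff the syntactically outermost variable
   occurring infinitely often is bound by a mu *)
Definition mc_adam_inf (pi : nat -> config) : Prop :=
  exists z chi,
    inf_often z pi /\ binder_of z chi /\ (exists g, chi = FMu z g) /\
    (forall y chiy, inf_often y pi -> binder_of y chiy -> Sub chi chiy).

Definition adam_wins_game (Hinit : @process S L) : Prop :=
  adam_has_winning_strategy mc_move mc_adam mc_adam_end mc_adam_inf (Hinit, phi).

End MCGame.

(* Adam refutes phi compositionally: by induction on subformulas psi, if H is
   outside [[psi]]_E then from H |- psi he wins the game that stops at the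
   free variables of psi, where he has reached a process outside the value of
   that variable.  Boolean and modal connectives are one game step.  For
   mu Z.psi, Adam keeps returning to positions H' |- Z with H' outside the
   least fixpoint: being a fixpoint, it excludes H' from the body too, and a
   play that visits Z forever is Adam's since Z is then the outermost
   recurring variable.  For nu Z.psi, the set of H' from which Adam wins at
   H' |- Z is closed under the dual functional, so it contains the complement
   of the greatest fixpoint; the impredicative definition of the fixpoints
   makes ordinal approximants unnecessary.  Strategies are glued together
   with Hilbert's epsilon, switching at a point of the history determined by
   the play. *)

From Stdlib Require Import List Arith Lia Classical ClassicalEpsilon.
Import ListNotations.

Lemma least_witness (P : nat -> Prop) :
  (exists n, P n) -> exists m, P m /\ forall k, k < m -> ~ P k.
Proof.
  intros [n Hn]. induction n as [n IH] using (well_founded_ind lt_wf).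
  destruct (classic (exists k, k < n /\ P k)) as [[k [Hk HPk]]|Hno].
  - exact (IH k Hk HPk).
  - exists n. split; [exact Hn|]. intros k Hk HPk. apply Hno. eauto.
Qed.

Lemma last_witness_upto (P : nat -> Prop) n :
  P 0 -> exists j, j <= n /\ P j /\ forall k, j < k <= n -> ~ P k.
Proof.
  intros HP0.
  destruct (least_witness (fun m => exists j, j <= n /\ P j /\ m = n - j))
    as [m [[j [Hjn [Pj ->]]] Hmin]]; [exists (n - 0), 0; split; [lia|auto]|].
  exists j. repeat split; [exact Hjn|exact Pj|]. intros k Hk Pk.
  apply (Hmin (n - k)); [lia|]. exists k. repeat split; [lia|exact Pk].
Qed.

Lemma map_seq_add {A} (f : nat -> A) len : forall j s,
  map f (seq (j + s) len) = map (fun k => f (j + k)) (seq s len).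
Proof.
  induction len as [|len IH]; intros j s; simpl; [reflexivity|].
  f_equal. rewrite <- IH. do 2 f_equal. lia.
Qed.

Lemma skipn_snoc {A} (h : list A) (c : A) j :
  j <= length h -> skipn j (h ++ [c]) = skipn j h ++ [c].
Proof. intros Hj. rewrite skipn_app. replace (j - length h) with 0 by lia. reflexivity. Qed.

(* Games in which the play is stopped as soon as it enters a set [X] of exit
   positions; Adam wins a stopped play iff it stops in [B]. *)
Section ExitGames.
Variables (C : Type) (dummy : C) (mv : C -> C -> Prop) (adam adam_end : C -> Prop)
  (adam_inf : (nat -> C) -> Prop).

Definition shift (pi : nat -> C) m : nat -> C := fun k => pi (m + k).

Hypothesis adam_inf_suffix : forall pi m, adam_inf (shift pi m) -> adam_inf pi.

Definition history (pi : nat -> C) i : list C := map pi (seq 0 (S i)).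

Definition follows (sg : strategy) (pi : nat -> C) i : Prop :=
  mv (pi i) (pi (S i)) /\ (adam (pi i) -> pi (S i) = sg (history pi i)).

Definition outcome (X B : C -> Prop) (c : C) : Prop :=
  (X c -> B c) /\ (~ X c -> stuck mv c -> adam_end c).

Definition wins_until (sg : strategy) (c0 : C) (X B : C -> Prop) : Prop :=
  legal mv adam sg /\
  (forall pi n, pi 0 = c0 -> (forall i, i < n -> follows sg pi i) ->
     (forall i, i < n -> ~ X (pi i)) -> outcome X B (pi n)) /\
  (forall pi, pi 0 = c0 -> (forall i, follows sg pi i) -> (forall i, ~ X (pi i)) ->
     adam_inf pi).

Definition can_win_until (c0 : C) (X B : C -> Prop) : Prop :=
  exists sg, wins_until sg c0 X B.

Lemma length_history pi i : length (history pi i) = S i.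
Proof. unfold history. rewrite length_map, length_seq. reflexivity. Qed.

Lemma nth_history pi i k : k <= i -> nth k (history pi i) dummy = pi k.
Proof.
  intros Hk. unfold history.
  rewrite nth_indep with (d' := pi 0) by (rewrite length_map, length_seq; lia).
  rewrite map_nth, seq_nth by lia. reflexivity.
Qed.

Lemma history_shift pi m i :
  skipn m (history pi (m + i)) = history (shift pi m) i.
Proof.
  unfold history. replace (S (m + i)) with (m + S i) by lia.
  rewrite seq_app, map_app, skipn_app, length_map, length_seq.
  rewrite skipn_all2 by (rewrite length_map, length_seq; lia).
  rewrite Nat.sub_diag. simpl.
  pose proof (map_seq_add pi (S i) m 0) as E. rewrite Nat.add_0_r in E. exact E.
Qed.

Lemma follows_agree sg sg' pi i :
  follows sg pi i -> sg (history pi i) = sg' (history pi i) -> follows sg' pi i.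
Proof.
  intros [Hmv Hsg] E. split; [exact Hmv|]. intros Ha. rewrite Hsg, E by exact Ha. reflexivity.
Qed.

Lemma follows_shift sg sg' pi m i :
  follows sg pi (m + i) -> sg (history pi (m + i)) = sg' (history (shift pi m) i) ->
  follows sg' (shift pi m) i.
Proof.
  intros [Hmv Hsg] E. unfold follows, shift. rewrite Nat.add_succ_r. split; [exact Hmv|].
  intros Ha. rewrite Hsg, E by exact Ha. reflexivity.
Qed.

Definition any_move : strategy := fun h => epsilon (inhabits dummy) (mv (last h dummy)).

Lemma any_move_legal : legal mv adam any_move.
Proof.
  intros h c _ Hex. unfold any_move. rewrite last_last.
  exact (epsilon_spec (inhabits dummy) (mv c) Hex).
Qed.

Definition winning_choice (c : C) (X B : C -> Prop) : strategy :=
  epsilon (inhabits any_move)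
    (fun sg => legal mv adam sg /\ (can_win_until c X B -> wins_until sg c X B)).

Lemma winning_choice_spec c X B :
  legal mv adam (winning_choice c X B) /\
  (can_win_until c X B -> wins_until (winning_choice c X B) c X B).
Proof.
  unfold winning_choice. apply epsilon_spec.
  destruct (classic (can_win_until c X B)) as [[sg Hsg]|Hno].
  - exists sg. split; [apply Hsg|tauto].
  - exists any_move. split; [exact any_move_legal|tauto].
Qed.

(* At a selected index [j] the history is cut: the strategy chosen for
   position [j] only sees the suffix of the play from [j] on. *)
Definition switch_at (Sel : list C -> nat -> Prop) (sg : strategy) (X B : C -> Prop)
  : strategy := fun h =>
  match excluded_middle_informative (exists j, Sel h j) with
  | left p => let j := proj1_sig (constructive_indefinite_description _ p) in
              winning_choice (nth j h dummy) X B (skipn j h)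
  | right _ => sg h
  end.

Lemma switch_at_selected Sel sg X B h j :
  Sel h j -> (forall j', Sel h j' -> j' = j) ->
  switch_at Sel sg X B h = winning_choice (nth j h dummy) X B (skipn j h).
Proof.
  intros Hj Huniq. unfold switch_at.
  destruct (excluded_middle_informative _) as [p|n]; [|exfalso; eauto].
  destruct (constructive_indefinite_description _ p) as [j' Hj']. simpl.
  rewrite (Huniq j' Hj'). reflexivity.
Qed.

Lemma switch_at_unselected Sel sg X B h :
  (forall j, ~ Sel h j) -> switch_at Sel sg X B h = sg h.
Proof.
  intros Hno. unfold switch_at.
  destruct (excluded_middle_informative _) as [[j Hj]|_]; [exfalso; exact (Hno j Hj)|reflexivity].
Qed.

Lemma switch_at_legal Sel sg X B :
  legal mv adam sg -> (forall h j, Sel h j -> j < length h) ->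
  legal mv adam (switch_at Sel sg X B).
Proof.
  intros Hsg Hlen h c Ha Hex. unfold switch_at.
  destruct (excluded_middle_informative _) as [p|_]; [|exact (Hsg h c Ha Hex)].
  destruct (constructive_indefinite_description _ p) as [j Hj]. simpl.
  pose proof (Hlen _ _ Hj) as Hj'. rewrite length_app in Hj'. simpl in Hj'.
  rewrite skipn_snoc by lia. exact (proj1 (winning_choice_spec _ X B) (skipn j h) c Ha Hex).
Qed.

Lemma outcome_after_switch sg pi m n X B :
  can_win_until (pi m) X B ->
  (forall i, m + i < n -> follows sg pi (m + i)) ->
  (forall i, m + i < n ->
     sg (history pi (m + i)) = winning_choice (pi m) X B (history (shift pi m) i)) ->
  (forall i, m <= i < n -> ~ X (pi i)) -> m <= n -> outcome X B (pi n).
Proof.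
  intros Hwin Hfol Hagree HX Hmn.
  destruct (proj2 (winning_choice_spec _ X B) Hwin) as [_ [Hfin _]].
  replace n with (m + (n - m)) by lia.
  apply (Hfin (shift pi m) (n - m)).
  - unfold shift. rewrite Nat.add_0_r. reflexivity.
  - intros i Hi. apply follows_shift with (sg := sg); [apply Hfol|apply Hagree]; lia.
  - intros i Hi. apply HX. lia.
Qed.

Lemma adam_inf_after_switch sg pi m X B :
  can_win_until (pi m) X B ->
  (forall i, follows sg pi (m + i)) ->
  (forall i, sg (history pi (m + i)) = winning_choice (pi m) X B (history (shift pi m) i)) ->
  (forall i, m <= i -> ~ X (pi i)) -> adam_inf pi.
Proof.
  intros Hwin Hfol Hagree HX.
  destruct (proj2 (winning_choice_spec _ X B) Hwin) as [_ [_ Hinf]].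
  apply (adam_inf_suffix pi m), Hinf.
  - unfold shift. rewrite Nat.add_0_r. reflexivity.
  - intros i. exact (follows_shift _ _ _ _ _ (Hfol i) (Hagree i)).
  - intros i. apply HX. lia.
Qed.

Definition first_hit (Sw : nat -> C -> Prop) (h : list C) j : Prop :=
  j < length h /\ Sw j (nth j h dummy) /\ forall k, k < j -> ~ Sw k (nth k h dummy).

Lemma first_hit_unique Sw h j j' : first_hit Sw h j -> first_hit Sw h j' -> j' = j.
Proof.
  intros [_ [Hj Hbefore]] [_ [Hj' Hbefore']].
  destruct (lt_eq_lt_dec j j') as [[Hlt|Heq]|Hlt]; [|auto|];
    exfalso; [exact (Hbefore' j Hlt Hj)|exact (Hbefore j' Hlt Hj')].
Qed.

Lemma first_hit_history Sw pi i j :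
  first_hit Sw (history pi i) j <-> j <= i /\ Sw j (pi j) /\ forall k, k < j -> ~ Sw k (pi k).
Proof.
  unfold first_hit. rewrite length_history.
  split; intros [Hj [HSw Hbefore]]; (split; [lia|]);
    [rewrite nth_history in HSw by lia|rewrite nth_history by lia]; (split; [exact HSw|]);
    intros k Hk; [rewrite <- (nth_history pi i k) by lia|rewrite nth_history by lia];
    exact (Hbefore k Hk).
Qed.

Definition switch_first (Sw : nat -> C -> Prop) (sg1 : strategy) (X B : C -> Prop)
  : strategy := switch_at (first_hit Sw) sg1 X B.

Lemma switch_first_before Sw sg1 X B pi m i :
  (forall k, k < m -> ~ Sw k (pi k)) -> i < m ->
  follows (switch_first Sw sg1 X B) pi i -> follows sg1 pi i.
Proof.
  intros Hno Hi Hfol. apply (follows_agree _ _ _ _ Hfol).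
  apply switch_at_unselected. intros j Hj.
  apply first_hit_history in Hj as [Hji [HSw _]]. exact (Hno j ltac:(lia) HSw).
Qed.

Lemma switch_first_after Sw sg1 X B pi m i :
  Sw m (pi m) -> (forall k, k < m -> ~ Sw k (pi k)) ->
  switch_first Sw sg1 X B (history pi (m + i))
  = winning_choice (pi m) X B (history (shift pi m) i).
Proof.
  intros HSw Hno.
  assert (Hm : first_hit Sw (history pi (m + i)) m)
    by (apply first_hit_history; repeat split; auto; lia).
  unfold switch_first.
  rewrite (switch_at_selected _ _ _ _ _ m Hm (fun j' Hj' => first_hit_unique _ _ _ _ Hm Hj')).
  rewrite nth_history, history_shift by lia. reflexivity.
Qed.

Section Switching.
Variables (c0 : C) (sg1 : @strategy C) (Sw : nat -> C -> Prop) (X B : C -> Prop).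
Hypothesis sg1_legal : legal mv adam sg1.
Hypothesis switch_wins : forall pi n, pi 0 = c0 -> (forall i, i < n -> follows sg1 pi i) ->
  (forall i, i < n -> ~ X (pi i) /\ ~ Sw i (pi i)) -> Sw n (pi n) -> can_win_until (pi n) X B.
Hypothesis no_switch_outcome : forall pi n, pi 0 = c0 -> (forall i, i < n -> follows sg1 pi i) ->
  (forall i, i < n -> ~ X (pi i) /\ ~ Sw i (pi i)) -> ~ Sw n (pi n) -> outcome X B (pi n).
Hypothesis no_switch_adam_inf : forall pi, pi 0 = c0 -> (forall i, follows sg1 pi i) ->
  (forall i, ~ X (pi i) /\ ~ Sw i (pi i)) -> adam_inf pi.

Let sg := switch_first Sw sg1 X B.

Lemma switch_first_outcome pi n : pi 0 = c0 ->
  (forall i, i < n -> follows sg pi i) -> (forall i, i < n -> ~ X (pi i)) -> outcome X B (pi n).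
Proof.
  intros Hpi0 Hfol HX.
  destruct (classic (exists k, k <= n /\ Sw k (pi k))) as [Hex|Hnone].
  - destruct (least_witness _ Hex) as [m [[Hmn HSw] Hmin]].
    assert (Hno : forall k, k < m -> ~ Sw k (pi k))
      by (intros k Hk HSk; apply (Hmin k Hk); split; [lia|exact HSk]).
    assert (Hwin : can_win_until (pi m) X B).
    { apply switch_wins; [exact Hpi0| | |exact HSw].
      - intros i Hi. apply (switch_first_before Sw sg1 X B pi m); auto. apply Hfol. lia.
      - intros i Hi. split; [apply HX; lia|auto]. }
    apply (outcome_after_switch sg pi m n X B Hwin); [| |intros i Hi; apply HX; lia|exact Hmn].
    + intros i Hi. apply Hfol. exact Hi.
    + intros i _. apply switch_first_after; assumption.
  - assert (Hno : forall k, k <= n -> ~ Sw k (pi k)) by (intros k Hk HSk; eauto).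
    apply no_switch_outcome; [exact Hpi0| | |apply Hno; lia].
    + intros i Hi. apply (switch_first_before Sw sg1 X B pi n); [|exact Hi|apply Hfol, Hi].
      intros k Hk. apply Hno. lia.
    + intros i Hi. split; [apply HX, Hi|apply Hno; lia].
Qed.

Lemma switch_first_adam_inf pi : pi 0 = c0 ->
  (forall i, follows sg pi i) -> (forall i, ~ X (pi i)) -> adam_inf pi.
Proof.
  intros Hpi0 Hfol HX.
  destruct (classic (exists k, Sw k (pi k))) as [Hex|Hnone].
  - destruct (least_witness _ Hex) as [m [HSw Hno]].
    assert (Hwin : can_win_until (pi m) X B).
    { apply switch_wins; [exact Hpi0| | |exact HSw].
      - intros i Hi. exact (switch_first_before Sw sg1 X B pi m i Hno Hi (Hfol i)).
      - intros i Hi. split; [apply HX|exact (Hno i Hi)]. }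
    apply (adam_inf_after_switch sg pi m X B Hwin); [intros i; apply Hfol| |intros i _; apply HX].
    intros i. apply switch_first_after; assumption.
  - apply no_switch_adam_inf; [exact Hpi0| |].
    + intros i. apply (switch_first_before Sw sg1 X B pi (S i)); [|lia|apply Hfol].
      intros k _ HSk. eauto.
    + intros i. split; [apply HX|]. intros HSi. eauto.
Qed.

Lemma can_win_by_switching : can_win_until c0 X B.
Proof.
  exists sg. split; [|split].
  - apply switch_at_legal; [exact sg1_legal|]. intros h j [Hj _]. exact Hj.
  - exact switch_first_outcome.
  - exact switch_first_adam_inf.
Qed.

End Switching.

Lemma can_win_at_exit c0 X B : X c0 -> B c0 -> can_win_until c0 X B.
Proof.
  intros HX HB. exists any_move. split; [exact any_move_legal|split].
  - intros pi [|n] Hpi0 _ Havoid.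
    + rewrite Hpi0. split; tauto.
    + exfalso. apply (Havoid 0); [lia|]. rewrite Hpi0. exact HX.
  - intros pi Hpi0 _ Havoid. exfalso. apply (Havoid 0). rewrite Hpi0. exact HX.
Qed.

Lemma can_win_after_one_move c0 sg X B :
  legal mv adam sg -> ~ X c0 -> (stuck mv c0 -> adam_end c0) ->
  (forall pi, pi 0 = c0 -> follows sg pi 0 -> can_win_until (pi 1) X B) ->
  can_win_until c0 X B.
Proof.
  intros Hsg HX Hstuck Hnext.
  apply (can_win_by_switching c0 sg (fun i _ => i = 1)); [exact Hsg| | |].
  - intros pi n Hpi0 Hfol _ ->. apply Hnext; [exact Hpi0|apply Hfol; lia].
  - intros pi [|[|n]] Hpi0 _ Havoid Hn.
    + rewrite Hpi0. split; tauto.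
    + exfalso. exact (Hn eq_refl).
    + exfalso. exact (proj2 (Havoid 1 ltac:(lia)) eq_refl).
  - intros pi _ _ Havoid. exfalso. exact (proj2 (Havoid 1) eq_refl).
Qed.

Lemma can_win_eve_node c0 X B :
  ~ X c0 -> ~ adam c0 -> (stuck mv c0 -> adam_end c0) ->
  (forall c1, mv c0 c1 -> can_win_until c1 X B) -> can_win_until c0 X B.
Proof.
  intros HX Ha Hstuck Hnext.
  apply (can_win_after_one_move c0 any_move); [exact any_move_legal|exact HX|exact Hstuck|].
  intros pi Hpi0 [Hmv _]. apply Hnext. rewrite <- Hpi0. exact Hmv.
Qed.

Lemma can_win_adam_node c0 c1 X B :
  ~ X c0 -> adam c0 -> mv c0 c1 -> can_win_until c1 X B -> can_win_until c0 X B.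
Proof.
  intros HX Ha Hmv Hwin.
  set (sg := fun h => if excluded_middle_informative (h = [c0]) then c1 else any_move h).
  apply (can_win_after_one_move c0 sg); [| exact HX | |].
  - intros h c Hac Hex. unfold sg.
    destruct (excluded_middle_informative _) as [E|_]; [|exact (any_move_legal h c Hac Hex)].
    apply app_eq_unit in E as [[_ E]|[_ E]]; [injection E as ->; exact Hmv|discriminate].
  - intros Hstuck. exfalso. apply Hstuck. exists c1. exact Hmv.
  - intros pi Hpi0 [_ Hsg]. rewrite Hsg by (rewrite Hpi0; exact Ha).
    unfold history, sg. simpl. rewrite Hpi0.
    destruct (excluded_middle_informative _) as [_|n]; [exact Hwin|exfalso; auto].
Qed.

Lemma invariant_along (Inv : C -> Prop) pi n :
  (forall c c', Inv c -> mv c c' -> Inv c') -> Inv (pi 0) ->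
  (forall i, i < n -> mv (pi i) (pi (S i))) -> forall i, i <= n -> Inv (pi i).
Proof.
  intros Hinv H0 Hmv i. induction i as [|i IH]; intros Hi; [exact H0|].
  apply (Hinv (pi i)); [apply IH; lia|apply Hmv; lia].
Qed.

Lemma can_win_then (Inv : C -> Prop) c0 X1 B1 X B :
  (forall c c', Inv c -> mv c c' -> Inv c') -> Inv c0 ->
  can_win_until c0 X1 B1 -> (forall c, X c -> X1 c) ->
  (forall c, Inv c -> X1 c -> B1 c -> can_win_until c X B) ->
  can_win_until c0 X B.
Proof.
  intros Hinv Hc0 [sg1 [Hsg1 [Hfin Hinf]]] HXX1 Hcont.
  apply (can_win_by_switching c0 sg1 (fun _ c => X1 c)); [exact Hsg1| | |].
  - intros pi n Hpi0 Hfol Havoid HX1. apply Hcont; [| exact HX1 |].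
    + apply (invariant_along Inv pi n Hinv); [rewrite Hpi0; exact Hc0| |lia].
      intros i Hi. apply Hfol, Hi.
    + apply (Hfin pi n Hpi0 Hfol); [intros i Hi; apply Havoid, Hi|exact HX1].
  - intros pi n Hpi0 Hfol Havoid HnX1. split; [intros HX; exfalso; auto|].
    intros _. apply (Hfin pi n Hpi0 Hfol); [intros i Hi; apply Havoid, Hi|exact HnX1].
  - intros pi Hpi0 Hfol Havoid. apply Hinf; [exact Hpi0|exact Hfol|intros i; apply Havoid].
Qed.

Lemma can_win_within (Rg : C -> Prop) c0 X1 X B :
  can_win_until c0 X1 B -> (forall c, X c -> X1 c) -> Rg c0 ->
  (forall c c', Rg c -> ~ X1 c -> mv c c' -> Rg c') ->
  (forall c, Rg c -> X1 c -> X c) -> can_win_until c0 X B.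
Proof.
  intros [sg [Hsg [Hfin Hinf]]] HXX1 Hc0 Hstep HX1X. exists sg. split; [exact Hsg|split].
  - intros pi n Hpi0 Hfol Havoid.
    assert (HRg : forall i, i <= n -> Rg (pi i)).
    { induction i as [|i IH]; intros Hi; [rewrite Hpi0; exact Hc0|].
      apply (Hstep (pi i)); [apply IH; lia| |apply Hfol; lia].
      intros HX1. apply (Havoid i); [lia|]. apply HX1X; [apply IH; lia|exact HX1]. }
    destruct (Hfin pi n Hpi0 Hfol) as [Hexit Hstuck].
    { intros i Hi HX1. apply (Havoid i Hi). apply HX1X; [apply HRg; lia|exact HX1]. }
    split; [intros HX; apply Hexit, HXX1, HX|].
    intros HnX. apply Hstuck. intros HX1. apply HnX, HX1X; [apply HRg; lia|exact HX1].
  - intros pi Hpi0 Hfol Havoid.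
    assert (HRg : forall i, Rg (pi i)).
    { induction i as [|i IH]; [rewrite Hpi0; exact Hc0|].
      apply (Hstep (pi i) _ IH); [|apply Hfol].
      intros HX1. apply (Havoid i), HX1X; [exact IH|exact HX1]. }
    apply Hinf; [exact Hpi0|exact Hfol|].
    intros i HX1. apply (Havoid i), HX1X; [apply HRg|exact HX1].
Qed.

Definition after_last (D : C -> Prop) (h : list C) j : Prop :=
  exists i, j = S i /\ j < length h /\ D (nth i h dummy) /\
    forall k, i < k < length h -> ~ D (nth k h dummy).

Lemma after_last_unique D h j j' : after_last D h j -> after_last D h j' -> j' = j.
Proof.
  intros [i1 [-> [Hlen1 [HD1 Hno1]]]] [i2 [-> [Hlen2 [HD2 Hno2]]]].
  destruct (lt_eq_lt_dec i1 i2) as [[Hlt| ->]|Hlt]; [|reflexivity|];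
    exfalso; [exact (Hno1 i2 ltac:(lia) HD2)|exact (Hno2 i1 ltac:(lia) HD1)].
Qed.

Lemma after_last_history D pi j i :
  D (pi j) -> (forall k, j < k <= S j + i -> ~ D (pi k)) ->
  after_last D (history pi (S j + i)) (S j).
Proof.
  intros HD Hno. rewrite <- (nth_history pi (S j + i) j) in HD by lia.
  exists j. rewrite length_history. repeat split; [lia|exact HD|].
  intros k Hk. rewrite nth_history by lia. apply Hno. lia.
Qed.

(* An exit through [X1] would be won, hence lie in [X] or in [D]. *)
Lemma no_exit_before_restart sg pi m N (D X X1 B1 : C -> Prop) :
  can_win_until (pi m) X1 B1 ->
  (forall i, m + i < N -> follows sg pi (m + i)) ->
  (forall i, m + i < N ->
     sg (history pi (m + i)) = winning_choice (pi m) X1 B1 (history (shift pi m) i)) ->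
  (forall k, m <= k < N -> X1 (pi k) -> B1 (pi k) -> X (pi k) \/ D (pi k)) ->
  (forall k, m <= k < N -> ~ X (pi k) /\ ~ D (pi k)) ->
  forall k, m <= k < N -> ~ X1 (pi k).
Proof.
  intros Hwin Hfol Hagree Hexit Havoid k Hk HX1.
  destruct (least_witness (fun k => m <= k < N /\ X1 (pi k))) as [k0 [[Hk0 HX1k0] Hmin]];
    [eauto|].
  assert (HB1 : B1 (pi k0)).
  { apply (outcome_after_switch sg pi m k0 X1 B1 Hwin); [| | |lia|exact HX1k0].
    - intros i Hi. apply Hfol. lia.
    - intros i Hi. apply Hagree. lia.
    - intros i Hi HX1i. apply (Hmin i); [lia|split; [lia|exact HX1i]]. }
  destruct (Havoid k0 Hk0) as [HnX HnD].
  destruct (Hexit k0 Hk0 HX1k0 HB1) as [HX|HD]; contradiction.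
Qed.

Definition restart_after (D : C -> Prop) (X1 B1 : C -> Prop) : strategy :=
  switch_at (after_last D) any_move X1 B1.

Lemma restart_after_history D X1 B1 pi j i :
  D (pi j) -> (forall k, j < k <= S j + i -> ~ D (pi k)) ->
  restart_after D X1 B1 (history pi (S j + i))
  = winning_choice (pi (S j)) X1 B1 (history (shift pi (S j)) i).
Proof.
  intros Dj Hno. pose proof (after_last_history D pi j i Dj Hno) as Hj.
  unfold restart_after.
  rewrite (switch_at_selected _ _ _ _ _ (S j) Hj (fun j' Hj' => after_last_unique _ _ _ _ Hj Hj')).
  rewrite nth_history, history_shift by lia. reflexivity.
Qed.

(* Adam restarts a winning strategy for exits [X1] after every visit of [D]. *)
Section Loop.
Variables (Inv D X X1 B B1 : C -> Prop) (c0 : C).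
Hypothesis inv_step : forall c c', Inv c -> mv c c' -> Inv c'.
Hypothesis D_live : forall c, D c -> ~ X c /\ exists c', mv c c'.
Hypothesis restart_wins : forall c c', D c -> Inv c -> mv c c' -> can_win_until c' X1 B1.
Hypothesis exit_X1 : forall c, X c -> X1 c.
Hypothesis exit_back : forall c, Inv c -> X1 c -> B1 c -> (X c /\ B c) \/ D c.
Hypothesis D_often : forall pi, (forall i, ~ X (pi i)) ->
  (forall n, exists m, n <= m /\ D (pi m)) -> adam_inf pi.
Hypotheses (D_c0 : D c0) (Inv_c0 : Inv c0).

Let sg := restart_after D X1 B1.

Lemma exit_or_back c : Inv c -> X1 c -> B1 c -> X c \/ D c.
Proof. intros Ic HX1 HB1. destruct (exit_back c Ic HX1 HB1) as [[HX _]|HD]; auto. Qed.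

Lemma restart_after_outcome pi n : pi 0 = c0 ->
  (forall i, i < n -> follows sg pi i) -> (forall i, i < n -> ~ X (pi i)) -> outcome X B (pi n).
Proof.
  intros Hpi0 Hfol HX.
  assert (HInv : forall i, i <= n -> Inv (pi i)).
  { apply (invariant_along Inv pi n inv_step); [rewrite Hpi0; exact Inv_c0|].
    intros i Hi. apply Hfol, Hi. }
  destruct (classic (D (pi n))) as [Dn|nDn].
  { destruct (D_live _ Dn) as [nX [c' Hc']]. split; [intros HXn; contradiction|].
    intros _ Hstuck. exfalso. apply Hstuck. exists c'. exact Hc'. }
  destruct (last_witness_upto (fun k => D (pi k)) n) as [j [Hjn [Dj Hno]]];
    [rewrite Hpi0; exact D_c0|].
  assert (Hjn' : j < n) by (destruct (Nat.eq_dec j n) as [->|]; [contradiction|lia]).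
  assert (Hwin : can_win_until (pi (S j)) X1 B1)
    by (apply (restart_wins (pi j)); [exact Dj|apply HInv; lia|apply Hfol; lia]).
  assert (Hfol' : forall i, S j + i < n -> follows sg pi (S j + i))
    by (intros i Hi; apply Hfol, Hi).
  assert (Hagree : forall i, S j + i < n -> sg (history pi (S j + i)) =
            winning_choice (pi (S j)) X1 B1 (history (shift pi (S j)) i))
    by (intros i Hi; apply restart_after_history; [exact Dj|intros k Hk; apply Hno; lia]).
  destruct (outcome_after_switch sg pi (S j) n X1 B1 Hwin Hfol' Hagree) as [HB1 Hstuck1]; [|lia|].
  { apply (no_exit_before_restart sg pi (S j) n D X X1 B1 Hwin Hfol' Hagree).
    - intros k Hk. apply exit_or_back, HInv. lia.
    - intros k Hk. split; [apply HX; lia|apply Hno; lia]. }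
  split.
  - intros HXn. destruct (exit_back (pi n) (HInv n (le_n n)) (exit_X1 _ HXn) (HB1 (exit_X1 _ HXn)))
      as [[_ HBn]|Dn]; [exact HBn|contradiction].
  - intros HnX. apply Hstuck1. intros HX1.
    destruct (exit_or_back (pi n) (HInv n (le_n n)) HX1 (HB1 HX1)); contradiction.
Qed.

Lemma restart_after_adam_inf pi : pi 0 = c0 ->
  (forall i, follows sg pi i) -> (forall i, ~ X (pi i)) -> adam_inf pi.
Proof.
  intros Hpi0 Hfol HX.
  assert (HInv : forall i, Inv (pi i)).
  { intros i. apply (invariant_along Inv pi i inv_step); [rewrite Hpi0; exact Inv_c0| |lia].
    intros k _. apply Hfol. }
  destruct (classic (forall n, exists m, n <= m /\ D (pi m))) as [Hio|Hfin];
    [exact (D_often pi HX Hio)|].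
  apply not_all_ex_not in Hfin as [N HN].
  destruct (last_witness_upto (fun k => D (pi k)) N) as [j [_ [Dj Hno]]];
    [rewrite Hpi0; exact D_c0|].
  assert (Hno' : forall k, j < k -> ~ D (pi k)).
  { intros k Hk Dk. destruct (le_lt_dec k N); [exact (Hno k ltac:(lia) Dk)|].
    apply HN. exists k. split; [lia|exact Dk]. }
  assert (Hwin : can_win_until (pi (S j)) X1 B1)
    by exact (restart_wins (pi j) _ Dj (HInv j) (proj1 (Hfol j))).
  assert (Hagree : forall i, sg (history pi (S j + i)) =
            winning_choice (pi (S j)) X1 B1 (history (shift pi (S j)) i))
    by (intros i; apply restart_after_history; [exact Dj|intros k Hk; apply Hno'; lia]).
  apply (adam_inf_after_switch sg pi (S j) X1 B1 Hwin (fun i => Hfol _) Hagree).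
  intros k Hk.
  apply (no_exit_before_restart sg pi (S j) (S k) D X X1 B1 Hwin); [intros i _; apply Hfol
    |intros i _; apply Hagree|intros k' _; apply exit_or_back, HInv| |lia].
  intros k' Hk'. split; [apply HX|apply Hno'; lia].
Qed.

Lemma can_win_loop : can_win_until c0 X B.
Proof.
  exists sg. split; [|split].
  - apply switch_at_legal; [exact any_move_legal|]. intros h j [i [-> [Hj _]]]. exact Hj.
  - exact restart_after_outcome.
  - exact restart_after_adam_inf.
Qed.

End Loop.

Lemma follows_nth sg c0 h : consistent mv adam sg c0 h ->
  forall i, S i < length h -> follows sg (fun k => nth k h dummy) i.
Proof.
  intros [_ Hstep] i Hi.
  destruct (Hstep i (nth i h dummy) (nth (S i) h dummy)) as [Hmv Hsg];
    [apply nth_error_nth'; lia|apply nth_error_nth'; lia|].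
  split; [exact Hmv|]. intros Ha. rewrite (Hsg Ha). f_equal.
  apply nth_ext with (d := dummy) (d' := dummy).
  - rewrite length_history, firstn_length_le by lia. reflexivity.
  - intros k Hk. rewrite firstn_length_le in Hk by lia.
    rewrite nth_firstn, nth_history by lia. destruct (Nat.ltb_spec k (S i)); [reflexivity|lia].
Qed.

Lemma can_win_until_has_winning_strategy c0 X B :
  (forall c, X c -> stuck mv c) -> (forall c, X c -> B c -> adam_end c) ->
  can_win_until c0 X B -> adam_has_winning_strategy mv adam adam_end adam_inf c0.
Proof.
  intros Hdead HXB [sg [Hsg [Hfin Hinf]]]. exists sg. split; [exact Hsg|split].
  - intros h c Hcons Hstuck. set (pi := fun k => nth k (h ++ [c]) dummy).
    assert (Hlen : length (h ++ [c]) = S (length h)) by (rewrite length_app; simpl; lia).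
    assert (Hfol : forall i, i < length h -> follows sg pi i)
      by (intros i Hi; apply (follows_nth sg c0); [exact Hcons|lia]).
    assert (Hc : pi (length h) = c)
      by (unfold pi; rewrite app_nth2, Nat.sub_diag by lia; reflexivity).
    destruct (Hfin pi (length h)) as [Hexit Hend].
    + destruct Hcons as [Hc0 _]. unfold pi. apply nth_error_nth, Hc0.
    + exact Hfol.
    + intros i Hi HX. apply (Hdead _ HX). exists (pi (S i)). apply Hfol, Hi.
    + rewrite Hc in Hexit, Hend. destruct (classic (X c)) as [HX|HnX];
        [exact (HXB c HX (Hexit HX))|exact (Hend HnX Hstuck)].
  - intros pi Hpi0 Hfol. apply Hinf; [exact Hpi0|exact Hfol|].
    intros i HX. apply (Hdead _ HX). exists (pi (S i)). apply Hfol.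
Qed.

End ExitGames.

Section Syntax.
Context {L : Type}.
Implicit Types f g k b : form L.

Lemma Sub_trans f g k : Sub f g -> Sub g k -> Sub f k.
Proof. intros H1 H2. induction H1; eauto using Sub. Qed.

Lemma Sub_FVar_inv x g : Sub (FVar x) g -> g = FVar x.
Proof. intros H. inversion H; reflexivity. Qed.

Lemma binders_Sub f g : Sub f g -> exists l1 l2, binders f = l1 ++ binders g ++ l2.
Proof.
  induction 1; simpl;
    try (destruct IHSub as [l1 [l2 ->]]);
    try solve [exists l1, l2; reflexivity].
  - exists [], []. rewrite app_nil_r. reflexivity.
  - exists l1, (l2 ++ binders f2). rewrite <- !app_assoc. reflexivity.
  - exists (binders f1 ++ l1), l2. rewrite <- !app_assoc. reflexivity.
  - exists l1, (l2 ++ binders f2). rewrite <- !app_assoc. reflexivity.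
  - exists (binders f1 ++ l1), l2. rewrite <- !app_assoc. reflexivity.
  - exists (z :: l1), l2. reflexivity.
  - exists (z :: l1), l2. reflexivity.
Qed.

Lemma binders_Sub_incl f g y : Sub f g -> In y (binders g) -> In y (binders f).
Proof.
  intros H Hy. destruct (binders_Sub _ _ H) as [l1 [l2 ->]].
  apply in_or_app. right. apply in_or_app. left. exact Hy.
Qed.

Lemma binders_Sub_NoDup f g : Sub f g -> NoDup (binders f) -> NoDup (binders g).
Proof.
  intros H Hnd. destruct (binders_Sub _ _ H) as [l1 [l2 E]]. rewrite E in Hnd.
  exact (NoDup_app_remove_r _ _ (NoDup_app_remove_l _ _ Hnd)).
Qed.

Lemma NoDup_app_disjoint (l1 l2 : list var) x : NoDup (l1 ++ l2) -> In x l1 -> In x l2 -> False.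
Proof.
  induction l1 as [|a l1 IH]; simpl; intros Hnd H1 H2; [exact H1|].
  inversion Hnd as [|? ? Ha Hnd']; subst. destruct H1 as [<-|H1].
  - apply Ha. apply in_or_app. right. exact H2.
  - exact (IH Hnd' H1 H2).
Qed.

Definition binds (z : var) b : Prop := exists g, b = FMu z g \/ b = FNu z g.

Lemma binds_in_binders f b z : Sub f b -> binds z b -> In z (binders f).
Proof. intros H [g [->| ->]]; apply (binders_Sub_incl _ _ z H); left; reflexivity. Qed.

Lemma in_binders_binds f z : In z (binders f) -> exists b, Sub f b /\ binds z b.
Proof.
  induction f as [| |f1 IH1 f2 IH2|f1 IH1 f2 IH2| | | | | | |v f IH|v f IH];
    simpl; intros Hz; try contradiction;
    try (destruct (IHf Hz) as [b [Hb Hzb]]; exists b; split; [constructor; exact Hb|exact Hzb]).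
  - apply in_app_or in Hz as [Hz|Hz];
      [destruct (IH1 Hz) as [b [Hb Hzb]]|destruct (IH2 Hz) as [b [Hb Hzb]]];
      exists b; split; eauto using Sub.
  - apply in_app_or in Hz as [Hz|Hz];
      [destruct (IH1 Hz) as [b [Hb Hzb]]|destruct (IH2 Hz) as [b [Hb Hzb]]];
      exists b; split; eauto using Sub.
  - destruct Hz as [<-|Hz]; [exists (FMu v f); split; [constructor|exists f; auto]|].
    destruct (IH Hz) as [b [Hb Hzb]]. exists b. split; [apply Sub_Mu, Hb|exact Hzb].
  - destruct Hz as [<-|Hz]; [exists (FNu v f); split; [constructor|exists f; auto]|].
    destruct (IH Hz) as [b [Hb Hzb]]. exists b. split; [apply Sub_Nu, Hb|exact Hzb].
Qed.

Lemma binder_unique f z b1 b2 : NoDup (binders f) -> Sub f b1 -> Sub f b2 ->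
  binds z b1 -> binds z b2 -> b1 = b2.
Proof.
  revert b1 b2.
  induction f as [| |f1 IH1 f2 IH2|f1 IH1 f2 IH2| | | | | | |v f IH|v f IH];
    intros b1 b2 Hnd H1 H2 Z1 Z2; simpl in Hnd.
  all: try solve [destruct Z1 as [? [->| ->]]; inversion H1].
  all: try solve [inversion H1; subst; [destruct Z1 as [? [E|E]]; discriminate|];
                  inversion H2; subst; [destruct Z2 as [? [E|E]]; discriminate|]; eauto].
  1,2: inversion H1; subst; [destruct Z1 as [? [E|E]]; discriminate| |];
       inversion H2; subst; try (destruct Z2 as [? [E|E]]; discriminate);
       solve [apply IH1; [eapply NoDup_app_remove_r; eauto|auto..]
             |apply IH2; [eapply NoDup_app_remove_l; eauto|auto..]
             |exfalso; apply (NoDup_app_disjoint _ _ z Hnd); eapply binds_in_binders; eauto].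
  all: inversion Hnd as [|? ? Hv Hnd']; subst;
       inversion H1; subst; inversion H2; subst; auto; exfalso;
       solve [destruct Z1 as [g [E|E]]; inversion E; subst; apply Hv; eapply binds_in_binders; eauto
             |destruct Z2 as [g [E|E]]; inversion E; subst; apply Hv; eapply binds_in_binders; eauto].
Qed.

Lemma occ_Sub phi f y p : Sub phi f -> occ y p f ->
  (exists p', occ y p' phi) \/
  exists b k, Sub phi b /\ (b = FMu y k \/ b = FNu y k) /\ Sub k f.
Proof.
  intros H. revert p. induction H; intros p Hocc; try solve [left; eauto].
  all: try solve [destruct (IHSub p Hocc) as [[p' Hp]|[b [k [Hb [Eb Hk]]]]];
    [left; eexists; constructor; eauto|right; exists b, k; split; [constructor; auto|auto]]].
  all: destruct (IHSub p Hocc) as [[p' Hp]|[b [k [Hb [Eb Hk]]]]];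
    [destruct (Nat.eq_dec z y) as [<-|Hne];
       [right; eexists _, f; split; [constructor|split; auto]|left; exists p'; constructor; auto]
    |right; exists b, k; split; [constructor; auto|auto]].
Qed.

Lemma occ_Sub_not_binders phi f y p :
  NoDup (binders phi) -> (forall z p, occ z p phi -> ~ In z (binders phi)) ->
  Sub phi f -> occ y p f -> ~ In y (binders f).
Proof.
  intros Hnd Hfree Hs Hocc Hin.
  destruct (occ_Sub phi f y p Hs Hocc) as [[p' Hp]|[b [k [Hb [Eb Hk]]]]].
  - apply (Hfree y p' Hp). exact (binders_Sub_incl _ _ _ Hs Hin).
  - pose proof (binders_Sub_NoDup _ _ Hb Hnd) as Hndb.
    destruct Eb as [->| ->]; simpl in Hndb; inversion Hndb as [|? ? Hy _]; subst;
      apply Hy; exact (binders_Sub_incl _ _ _ Hk Hin).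
Qed.

Lemma occ_of_Sub_FVar g y : Sub g (FVar y) -> ~ In y (binders g) -> exists p, occ y p g.
Proof.
  intros H. remember (FVar y) as t eqn:Et. revert Et.
  induction H; intros Et Hy; subst; simpl in Hy; [exists false; constructor|..].
  all: destruct IHSub as [p Hp];
    [reflexivity|intros Hin; apply Hy; auto using in_or_app, in_cons|].
  all: eexists; constructor; try exact Hp; intros ->; apply Hy; left; reflexivity.
Qed.

Lemma neg_var_occ f y : Sub f (FNeg (FVar y)) ->
  (forall g, Sub f (FNeg g) -> exists z, g = FVar z) ->
  occ y true f \/ exists k, (Sub f (FMu y k) \/ Sub f (FNu y k)) /\ occ y true k.
Proof.
  intros H. remember (FNeg (FVar y)) as t eqn:Et. revert Et.
  induction H; intros Et Hneg; subst.
  1: left; exact (occ_Neg (occ_Var y)).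
  1: destruct (Hneg f (Sub_refl _)) as [x ->]; apply Sub_FVar_inv in H; discriminate.
  all: destruct IHSub as [Hocc|[k [Hk Hocc]]];
    [reflexivity|intros g Hg; apply Hneg; constructor; exact Hg| |].
  all: try solve [left; constructor; auto
                 |right; exists k; split; [destruct Hk; [left|right]; constructor; auto|exact Hocc]].
  all: destruct (Nat.eq_dec z y) as [<-|Hne];
    [right; exists f; split; [solve [left; constructor|right; constructor]|exact Hocc]
    |left; constructor; auto].
Qed.

End Syntax.

Section Monotonicity.
Context {S L : Type} (s0 : S) (T : @trans S L -> Prop) (I : @trans S L -> @trans S L -> Prop).

Definition pincl (X Y : @pset S L) : Prop := forall H, X H -> Y H.

Lemma pcompl_anti X Y : pincl X Y -> pincl (pcompl T I Y) (pcompl T I X).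
Proof. intros HXY H [Hp HnY]. split; [exact Hp|]. intros HX. exact (HnY (HXY H HX)). Qed.

Lemma dia_c_mono a X Y : pincl X Y -> pincl (dia_c s0 T I a X) (dia_c s0 T I a Y).
Proof. intros HXY H [Hp [r [Hr [Ha [Hc HX]]]]]. split; [exact Hp|]. exists r. auto. Qed.

Lemma dia_nc_mono a X Y : pincl X Y -> pincl (dia_nc T I a X) (dia_nc T I a Y).
Proof. intros HXY H [Hp [r [Hr [Ha [Hc HX]]]]]. split; [exact Hp|]. exists r. auto. Qed.

Lemma dia_o_mono X Y : pincl X Y -> pincl (dia_o T I X) (dia_o T I Y).
Proof. intros HXY H [Hp [M [HM [Hsq HX]]]]. split; [exact Hp|]. exists M. auto. Qed.

Lemma lfp_mono (F F' : pset -> pset) :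
  (forall Q, pincl (F Q) (F' Q)) -> pincl (lfp T I F) (lfp T I F').
Proof.
  intros HF H [Hp Hleast]. split; [exact Hp|].
  intros Q HQ Hpre. apply Hleast; [exact HQ|]. intros H' HF'. exact (Hpre H' (HF Q H' HF')).
Qed.

Lemma lfp_unfold (F : pset -> pset) :
  (forall Q Q', pincl Q Q' -> pincl (F Q) (F Q')) ->
  forall H, is_proc T I H -> F (lfp T I F) H -> lfp T I F H.
Proof.
  intros Hmono H Hp HF. split; [exact Hp|]. intros Q HQ Hpre. apply Hpre.
  apply (Hmono (lfp T I F)); [|exact HF]. intros H' [_ Hleast]. exact (Hleast Q HQ Hpre).
Qed.

Definition env_le (f : form L) (V V' : @valuation S L) : Prop :=
  forall y, (occ y false f -> pincl (V y) (V' y)) /\ (occ y true f -> pincl (V' y) (V y)).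

Lemma env_le_sub f g V V' :
  (forall y p, occ y p g -> occ y p f) -> env_le f V V' -> env_le g V V'.
Proof. intros Hocc Hle y. split; intros Hy; apply (Hle y); exact (Hocc _ _ Hy). Qed.

Lemma env_le_neg f V V' : env_le (FNeg f) V V' -> env_le f V' V.
Proof.
  intros Hle y. split; intros Hy;
    [apply (proj2 (Hle y)), (occ_Neg Hy)|apply (proj1 (Hle y)), (occ_Neg Hy)].
Qed.

Lemma env_le_upd f g v V V' Q :
  (forall y p, y <> v -> occ y p f -> occ y p g) -> env_le g V V' ->
  env_le f (upd V v Q) (upd V' v Q).
Proof.
  intros Hocc Hle y. unfold upd. destruct (Nat.eqb_spec y v) as [->|Hne].
  - split; intros _ H HQ; exact HQ.
  - split; intros Hy; apply (Hle y); exact (Hocc _ _ Hne Hy).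
Qed.

Lemma sem_mono f : forall V V', env_le f V V' -> pincl (sem s0 T I f V) (sem s0 T I f V').
Proof.
  induction f as [v|f IH|f1 IH1 f2 IH2|f1 IH1 f2 IH2|a f IH|a f IH|a f IH|a f IH|f IH|f IH
                 |v f IH|v f IH];
    intros V V' Hle; simpl.
  - exact (proj1 (Hle v) (occ_Var v)).
  - apply pcompl_anti, IH, env_le_neg, Hle.
  - intros H [H1 H2]. split; [apply (IH1 V)|apply (IH2 V)];
      [eapply env_le_sub; [|exact Hle]; intros; constructor; assumption|exact H1
      |eapply env_le_sub; [|exact Hle]; intros; apply occ_AndR; assumption|exact H2].
  - apply pcompl_anti. intros H [H1 H2]. split;
      [revert H1; apply pcompl_anti, (IH1 V)|revert H2; apply pcompl_anti, (IH2 V)];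
      (eapply env_le_sub; [|exact Hle]); intros; [constructor|apply occ_OrR]; assumption.
  - apply dia_c_mono, IH. eapply env_le_sub; [|exact Hle]. intros; constructor; assumption.
  - apply pcompl_anti, dia_c_mono, pcompl_anti, IH.
    eapply env_le_sub; [|exact Hle]. intros; constructor; assumption.
  - apply dia_nc_mono, IH. eapply env_le_sub; [|exact Hle]. intros; constructor; assumption.
  - apply pcompl_anti, dia_nc_mono, pcompl_anti, IH.
    eapply env_le_sub; [|exact Hle]. intros; constructor; assumption.
  - apply dia_o_mono, IH. eapply env_le_sub; [|exact Hle]. intros; constructor; assumption.
  - apply pcompl_anti, dia_o_mono, pcompl_anti, IH.
    eapply env_le_sub; [|exact Hle]. intros; constructor; assumption.
  - apply lfp_mono. intros Q. apply IH. eapply env_le_upd; [|exact Hle].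
    intros y p Hne Hy. constructor; [congruence|exact Hy].
  - apply pcompl_anti, lfp_mono. intros Q. apply pcompl_anti, IH.
    eapply env_le_upd; [|exact Hle]. intros y p Hne Hy. constructor; [congruence|exact Hy].
Qed.

End Monotonicity.

Section Refutation.
Context {S L : Type} (s0 : S) (T : @trans S L -> Prop) (I : @trans S L -> @trans S L -> Prop)
  (V : @valuation S L) (phi : form L).
Hypotheses (phi_TFL : TFL_formula phi) (phi_PNF : PNF phi).

Let cfg := @config S L.
Let move := mc_move s0 T I phi.
Let dummy : cfg := ((fun _ => False, None), FVar 0).

Definition proc_cfg (c : cfg) : Prop := is_proc T I (fst c).

Definition free_var_exit (psi : form L) (c : cfg) : Prop :=
  exists y, snd c = FVar y /\ ~ In y (binders psi).

Definition refutes_var (E : @valuation S L) (c : cfg) : Prop :=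
  forall y, snd c = FVar y -> ~ E y (fst c).

Definition adam_wins_until (c : cfg) (X B : cfg -> Prop) : Prop :=
  can_win_until cfg move mc_adam (mc_adam_end V) (mc_adam_inf phi) c X B.

Lemma mc_adam_inf_suffix pi m : mc_adam_inf phi (shift cfg pi m) -> mc_adam_inf phi pi.
Proof.
  intros [z [chi [Hio [Hchi [Hmu Hout]]]]]. exists z, chi.
  refine (conj _ (conj Hchi (conj Hmu _))).
  - intros n. destruct (Hio n) as [k [Hk E]]. exists (m + k). split; [lia|exact E].
  - intros y chiy Hy Hchiy. apply (Hout y chiy); [|exact Hchiy].
    intros n. destruct (Hy (m + n)) as [k [Hk E]].
    exists (k - m). unfold shift. replace (m + (k - m)) with k by lia. split; [lia|exact E].
Qed.

(* A move to a target [r] lands at [(X(tau r), r)], a legal process since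
   [r] is a transition of [T]. *)
Lemma move_proc_cfg c c' : proc_cfg c -> move c c' -> proc_cfg c'.
Proof.
  unfold proc_cfg. intros Hp Hmv. inversion Hmv; subst; simpl in *; try exact Hp.
  all: destruct Hp as [HR Ht]; split; simpl; try assumption.
  all: try (left; exists (tgt r); intros t'; tauto).
  all: destruct HR as [[s Hs]|[_ [s [Hsub _]]]];
    [exact (proj1 (proj1 (Hs r) H))|exact (proj1 (Hsub r H))].
Qed.

Lemma adam_wins_at_exit c X B : X c -> B c -> adam_wins_until c X B.
Proof. exact (can_win_at_exit _ dummy _ _ _ _ c X B). Qed.

Lemma adam_wins_eve_node c X B :
  ~ X c -> ~ mc_adam c -> (stuck move c -> mc_adam_end V c) ->
  (forall c1, move c c1 -> adam_wins_until c1 X B) -> adam_wins_until c X B.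
Proof. exact (can_win_eve_node _ dummy _ _ _ _ mc_adam_inf_suffix c X B). Qed.

Lemma adam_wins_adam_node c c1 X B :
  ~ X c -> mc_adam c -> move c c1 -> adam_wins_until c1 X B -> adam_wins_until c X B.
Proof. exact (can_win_adam_node _ dummy _ _ _ _ mc_adam_inf_suffix c c1 X B). Qed.

Lemma adam_wins_then c X1 B1 X B :
  proc_cfg c -> adam_wins_until c X1 B1 -> (forall c', X c' -> X1 c') ->
  (forall c', proc_cfg c' -> X1 c' -> B1 c' -> adam_wins_until c' X B) ->
  adam_wins_until c X B.
Proof.
  exact (can_win_then _ dummy _ _ _ _ mc_adam_inf_suffix proc_cfg c X1 B1 X B move_proc_cfg).
Qed.

Lemma adam_wins_within (Rg : cfg -> Prop) c X1 X B :
  adam_wins_until c X1 B -> (forall c', X c' -> X1 c') -> Rg c ->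
  (forall c' c'', Rg c' -> ~ X1 c' -> move c' c'' -> Rg c'') ->
  (forall c', Rg c' -> X1 c' -> X c') -> adam_wins_until c X B.
Proof. exact (can_win_within _ _ _ _ _ Rg c X1 X B). Qed.

Lemma adam_wins_loop (D X X1 B B1 : cfg -> Prop) c :
  (forall c', D c' -> ~ X c' /\ exists c'', move c' c'') ->
  (forall c' c'', D c' -> proc_cfg c' -> move c' c'' -> adam_wins_until c'' X1 B1) ->
  (forall c', X c' -> X1 c') ->
  (forall c', proc_cfg c' -> X1 c' -> B1 c' -> (X c' /\ B c') \/ D c') ->
  (forall pi, (forall i, ~ X (pi i)) -> (forall n, exists m, n <= m /\ D (pi m)) ->
     mc_adam_inf phi pi) ->
  D c -> proc_cfg c -> adam_wins_until c X B.
Proof.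
  exact (can_win_loop _ dummy _ _ _ _ mc_adam_inf_suffix proc_cfg D X X1 B B1 c move_proc_cfg).
Qed.

Lemma phi_binders_NoDup : NoDup (binders phi).
Proof. exact (proj1 (proj2 phi_PNF)). Qed.

Lemma phi_free_not_bound z p : occ z p phi -> ~ In z (binders phi).
Proof. exact (proj2 (proj2 phi_PNF) z p). Qed.

Lemma binder_of_var_unique z b g : Sub phi b -> binds z b ->
  Sub phi (FMu z g) \/ Sub phi (FNu z g) -> b = FMu z g \/ b = FNu z g.
Proof.
  intros Hb Hbz [Hg|Hg]; [left|right];
    apply (binder_unique phi z _ _ phi_binders_NoDup Hb Hg); try exact Hbz; exists g; auto.
Qed.

Lemma unfold_move H z b g c : move (H, FVar z) c -> Sub phi b ->
  (b = FMu z g \/ b = FNu z g) -> c = (H, g).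
Proof.
  intros Hmv Hb Eb. inversion Hmv as [| |? ? g' Hg'| | | | | | | | | |]; subst.
  assert (Hbz : binds z b) by (destruct Eb; exists g; auto).
  destruct Eb as [->| ->]; destruct (binder_of_var_unique z _ g' Hb Hbz Hg') as [E|E];
    inversion E; reflexivity.
Qed.

(* Variables bound in [g] belong to its subgame: play returns from them
   into [g]. *)
Definition in_subgame (g : form L) (c : cfg) : Prop :=
  Sub g (snd c) \/ exists y, snd c = FVar y /\ In y (binders g).

Lemma in_subgame_move g c c' : Sub phi g -> in_subgame g c -> ~ free_var_exit g c ->
  move c c' -> in_subgame g c'.
Proof.
  intros Hg HR HX Hmv. unfold in_subgame in *.
  inversion Hmv as [H' z g0|H' z g0|H' z g0 Hb0| | | | | | | | | |]; subst; simpl in *.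
  all: try (destruct HR as [HR|[y [Ey _]]]; [|discriminate]).
  all: try solve [left; eapply Sub_trans; [exact HR|]; eauto using Sub].
  1,2: right; exists z; split; [reflexivity|eapply binds_in_binders; [exact HR|exists g0; auto]].
  assert (Hin : In z (binders g)) by (apply NNPP; intros Hn; apply HX; exists z; auto).
  destruct (in_binders_binds g z Hin) as [b [Hb Hbz]].
  left. apply (Sub_trans _ _ _ Hb).
  destruct (binder_of_var_unique z b g0 (Sub_trans _ _ _ Hg Hb) Hbz Hb0) as [->| ->];
    eauto using Sub.
Qed.

Lemma in_subgame_exit P g c : Sub phi P -> (forall y p, occ y p g -> occ y p P) ->
  in_subgame g c -> free_var_exit g c -> free_var_exit P c.
Proof.
  intros HP Hocc HR [y [Ey Hy]]. exists y. split; [exact Ey|].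
  destruct HR as [HR|[y' [E' Hy']]]; [|rewrite Ey in E'; injection E' as <-; contradiction].
  rewrite Ey in HR. destruct (occ_of_Sub_FVar g y HR Hy) as [p Hp].
  exact (occ_Sub_not_binders phi P y p phi_binders_NoDup phi_free_not_bound HP (Hocc y p Hp)).
Qed.

(* Play never leaves the subgame of [g] except through its free variables,
   which are free in [P] too. *)
Lemma adam_wins_child P g H E : Sub phi P -> Sub P g ->
  (forall y p, occ y p g -> occ y p P) ->
  adam_wins_until (H, g) (free_var_exit g) (refutes_var E) ->
  adam_wins_until (H, g) (free_var_exit P) (refutes_var E).
Proof.
  intros HP HPg Hocc Hwin. apply (adam_wins_within (in_subgame g) _ (free_var_exit g)).
  - exact Hwin.
  - intros c [y [Ey Hy]]. exists y. split; [exact Ey|]. intros Hin.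
    exact (Hy (binders_Sub_incl _ _ _ HPg Hin)).
  - left. constructor.
  - intros c c'. apply in_subgame_move. exact (Sub_trans _ _ _ HP HPg).
  - intros c. apply in_subgame_exit; assumption.
Qed.

Lemma free_var_exit_stuck c : free_var_exit phi c -> stuck move c.
Proof.
  intros [y [Ey Hy]] [c' Hmv]. destruct c as [H f]. simpl in Ey. subst f.
  inversion Hmv as [| |? ? g Hb| | | | | | | | | |]; subst.
  apply Hy. destruct Hb as [Hb|Hb]; eapply binds_in_binders; eauto; exists g; auto.
Qed.

Definition agrees_off_binders (E : @valuation S L) : Prop :=
  forall y, ~ In y (binders phi) -> E y = V y.

Lemma agrees_off_binders_upd E v Q :
  In v (binders phi) -> agrees_off_binders E -> agrees_off_binders (upd E v Q).
Proof.
  intros Hv HE y Hy. unfold upd.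
  destruct (Nat.eqb_spec y v) as [->|_]; [contradiction|exact (HE y Hy)].
Qed.

Lemma body_mono v psi E : Sub phi (FMu v psi) \/ Sub phi (FNu v psi) ->
  forall Q Q', pincl Q Q' -> pincl (sem s0 T I psi (upd E v Q)) (sem s0 T I psi (upd E v Q')).
Proof.
  intros Hb Q Q' HQ. apply sem_mono. intros y. unfold upd.
  destruct (Nat.eqb_spec y v) as [->|_]; split; try (intros _ H HE; exact HE);
    [exact (fun _ => HQ)|].
  intros Hocc. exfalso. exact (phi_TFL v psi Hb Hocc).
Qed.

Definition refutable (psi : form L) : Prop :=
  forall E, agrees_off_binders E -> forall H, is_proc T I H -> ~ sem s0 T I psi E H ->
    adam_wins_until (H, psi) (free_var_exit psi) (refutes_var E).

Lemma refutable_var v : refutable (FVar v).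
Proof.
  intros E _ H _ Hs. apply adam_wins_at_exit.
  - exists v. split; [reflexivity|intros []].
  - intros y Ey. injection Ey as <-. exact Hs.
Qed.

Lemma refutable_neg g : Sub phi (FNeg g) -> refutable (FNeg g).
Proof.
  intros Hsub E HE H Hp Hs.
  destruct (proj1 phi_PNF g Hsub) as [y ->].
  assert (Hy : ~ In y (binders phi)).
  { destruct (neg_var_occ phi y Hsub (proj1 phi_PNF)) as [Hocc|[k [Hk Hocc]]].
    - exact (phi_free_not_bound y true Hocc).
    - exfalso. exact (phi_TFL y k Hk Hocc). }
  apply adam_wins_eve_node; [intros [z [E' _]]; discriminate|intros []| |].
  - intros _. unfold mc_adam_end. simpl. rewrite <- (HE y Hy).
    apply NNPP. intros Hn. apply Hs. split; assumption.
  - intros c1 Hmv. inversion Hmv.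
Qed.

Lemma refutable_and f1 f2 : Sub phi (FAnd f1 f2) -> refutable f1 -> refutable f2 ->
  refutable (FAnd f1 f2).
Proof.
  intros Hsub IH1 IH2 E HE H Hp Hs. simpl in Hs. apply not_and_or in Hs as [Hs|Hs].
  - apply adam_wins_adam_node with (c1 := (H, f1));
      [intros [z [E' _]]; discriminate|exact Logic.I|constructor|].
    apply (adam_wins_child (FAnd f1 f2));
      [exact Hsub|eauto using Sub|intros; constructor; assumption|].
    exact (IH1 E HE H Hp Hs).
  - apply adam_wins_adam_node with (c1 := (H, f2));
      [intros [z [E' _]]; discriminate|exact Logic.I|constructor|].
    apply (adam_wins_child (FAnd f1 f2));
      [exact Hsub|eauto using Sub|intros; apply occ_AndR; assumption|].
    exact (IH2 E HE H Hp Hs).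
Qed.

Lemma refutable_or f1 f2 : Sub phi (FOr f1 f2) -> refutable f1 -> refutable f2 ->
  refutable (FOr f1 f2).
Proof.
  intros Hsub IH1 IH2 E HE H Hp Hs.
  assert (Hs12 : pcompl T I (sem s0 T I f1 E) H /\ pcompl T I (sem s0 T I f2 E) H)
    by (apply NNPP; intros Hn; apply Hs; split; assumption).
  destruct Hs12 as [[_ Hs1] [_ Hs2]].
  apply adam_wins_eve_node; [intros [z [E' _]]; discriminate|intros []|
    intros Hstuck; exfalso; apply Hstuck; eexists; apply mv_orL|].
  intros c1 Hmv. inversion Hmv; subst.
  - apply (adam_wins_child (FOr f1 f2));
      [exact Hsub|eauto using Sub|intros; constructor; assumption|].
    exact (IH1 E HE H Hp Hs1).
  - apply (adam_wins_child (FOr f1 f2));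
      [exact Hsub|eauto using Sub|intros; apply occ_OrR; assumption|].
    exact (IH2 E HE H Hp Hs2).
Qed.

Lemma refutable_diac a g : refutable g -> refutable (FDiaC a g).
Proof.
  intros IH E HE H Hp Hs.
  apply adam_wins_eve_node; [intros [z [Ez _]]; discriminate|intros []|intros _; exact Logic.I|].
  intros c1 Hmv. pose proof (move_proc_cfg (H, _) c1 Hp Hmv) as Hp1. inversion Hmv; subst.
  apply IH; [exact HE|exact Hp1|]. intros Hs1. apply Hs. split; [exact Hp|]. exists r. auto.
Qed.

Lemma refutable_dianc a g : refutable g -> refutable (FDiaNC a g).
Proof.
  intros IH E HE H Hp Hs.
  apply adam_wins_eve_node; [intros [z [Ez _]]; discriminate|intros []|intros _; exact Logic.I|].
  intros c1 Hmv. pose proof (move_proc_cfg (H, _) c1 Hp Hmv) as Hp1. inversion Hmv; subst.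
  apply IH; [exact HE|exact Hp1|]. intros Hs1. apply Hs. split; [exact Hp|]. exists r. auto.
Qed.

Lemma refutable_diao g : refutable g -> refutable (FDiaO g).
Proof.
  intros IH E HE H Hp Hs.
  apply adam_wins_eve_node; [intros [z [Ez _]]; discriminate|intros []|intros _; exact Logic.I|].
  intros c1 Hmv. pose proof (move_proc_cfg (H, _) c1 Hp Hmv) as Hp1. inversion Hmv; subst.
  apply IH; [exact HE|exact Hp1|]. intros Hs1. apply Hs. split; [exact Hp|]. exists M. auto.
Qed.

Lemma refutable_boxc a g : refutable g -> refutable (FBoxC a g).
Proof.
  intros IH E HE H Hp Hs.
  assert (Hd : dia_c s0 T I a (pcompl T I (sem s0 T I g E)) H)
    by (apply NNPP; intros Hn; apply Hs; split; assumption).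
  destruct H as [R t]. destruct Hd as [_ [r [Hr [Ha [Hc [Hp1 Hs1]]]]]].
  apply adam_wins_adam_node with (c1 := ((Xs T (tgt r), Some r), g));
    [intros [z [Ez _]]; discriminate|exact Logic.I|apply mv_boxc; assumption|].
  exact (IH E HE _ Hp1 Hs1).
Qed.

Lemma refutable_boxnc a g : refutable g -> refutable (FBoxNC a g).
Proof.
  intros IH E HE H Hp Hs.
  assert (Hd : dia_nc T I a (pcompl T I (sem s0 T I g E)) H)
    by (apply NNPP; intros Hn; apply Hs; split; assumption).
  destruct H as [R t]. destruct Hd as [_ [r [Hr [Ha [Hc [Hp1 Hs1]]]]]].
  apply adam_wins_adam_node with (c1 := ((Xs T (tgt r), Some r), g));
    [intros [z [Ez _]]; discriminate|exact Logic.I|apply mv_boxnc; assumption|].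
  exact (IH E HE _ Hp1 Hs1).
Qed.

Lemma refutable_boxo g : refutable g -> refutable (FBoxO g).
Proof.
  intros IH E HE H Hp Hs.
  assert (Hd : dia_o T I (pcompl T I (sem s0 T I g E)) H)
    by (apply NNPP; intros Hn; apply Hs; split; assumption).
  destruct H as [R t]. destruct Hd as [_ [M [HM [Hsq [Hp1 Hs1]]]]].
  apply adam_wins_adam_node with (c1 := ((M, t), g));
    [intros [z [Ez _]]; discriminate|exact Logic.I|apply mv_boxo; assumption|].
  exact (IH E HE _ Hp1 Hs1).
Qed.

(* If [Z] is visited forever and the play never reaches a variable free in
   [mu Z. psi], every variable visited forever is bound inside [mu Z. psi], so
   [Z] is the outermost one. *)
Lemma mc_adam_inf_mu v psi pi : Sub phi (FMu v psi) ->
  (forall i, ~ free_var_exit (FMu v psi) (pi i)) -> inf_often v pi -> mc_adam_inf phi pi.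
Proof.
  intros Hsub Hexit Hio. exists v, (FMu v psi).
  refine (conj Hio (conj (conj Hsub (ex_intro _ psi (or_introl eq_refl)))
                         (conj (ex_intro _ psi eq_refl) _))).
  intros y chiy Hy [Hchiy Hbinds].
  destruct (Hy 0) as [m [_ Em]].
  assert (Hin : In y (binders (FMu v psi)))
    by (apply NNPP; intros Hn; apply (Hexit m); exists y; auto).
  destruct (in_binders_binds _ y Hin) as [b [Hb Hby]].
  replace chiy with b; [exact Hb|].
  exact (binder_unique phi y _ _ phi_binders_NoDup (Sub_trans _ _ _ Hsub Hb) Hchiy Hby Hbinds).
Qed.

Lemma body_exit v psi b E Q c :
  (b = FMu v psi \/ b = FNu v psi) -> free_var_exit psi c -> refutes_var (upd E v Q) c ->
  (snd c = FVar v /\ ~ Q (fst c)) \/ (free_var_exit b c /\ refutes_var E c).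
Proof.
  intros Eb [y [Ey Hy]] Hrefuted. pose proof (Hrefuted y Ey) as Hry. unfold upd in Hry.
  destruct (Nat.eqb_spec y v) as [->|Hne]; [left; split; assumption|right; split].
  - exists y. split; [exact Ey|].
    destruct Eb as [->| ->]; intros [E'|Hin]; solve [exact (Hne (eq_sym E'))|exact (Hy Hin)].
  - intros y' Ey'. rewrite Ey in Ey'. injection Ey' as <-. exact Hry.
Qed.

Lemma free_var_exit_body v psi b c :
  (b = FMu v psi \/ b = FNu v psi) -> free_var_exit b c -> free_var_exit psi c.
Proof.
  intros Eb [y [Ey Hy]]. exists y. split; [exact Ey|]. intros Hin. apply Hy.
  destruct Eb as [->| ->]; right; exact Hin.
Qed.

Lemma refutable_mu v psi : Sub phi (FMu v psi) -> refutable psi -> refutable (FMu v psi).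
Proof.
  intros Hsub IH E HE H Hp Hs.
  set (F := fun Q => sem s0 T I psi (upd E v Q)). simpl in Hs. fold F in Hs.
  assert (Hv : In v (binders phi)) by (eapply binds_in_binders; [exact Hsub|exists psi; auto]).
  apply adam_wins_eve_node; [intros [y [Ey _]]; discriminate|intros []|
    intros Hstuck; exfalso; apply Hstuck; eexists; apply mv_mu|].
  intros c1 Hmv. inversion Hmv; subst.
  apply adam_wins_loop with (D := fun c => snd c = FVar v /\ ~ lfp T I F (fst c))
    (X1 := free_var_exit psi) (B1 := refutes_var (upd E v (lfp T I F))).
  - intros [H' f] [Ef _]. simpl in Ef. subst f. split.
    + intros [y [Ey Hy]]. injection Ey as <-. apply Hy. left. reflexivity.
    + eexists. apply mv_var. left. exact Hsub.
  - intros [H' f] c' [Ef HnL] Hp' Hmv'. simpl in Ef, HnL, Hp'. subst f.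
    rewrite (unfold_move _ _ _ _ _ Hmv' Hsub (or_introl eq_refl)).
    apply IH; [apply agrees_off_binders_upd; assumption|exact Hp'|].
    intros Hs'. apply HnL, lfp_unfold; [|exact Hp'|exact Hs'].
    exact (body_mono v psi E (or_introl Hsub)).
  - intros c. exact (free_var_exit_body v psi _ c (or_introl eq_refl)).
  - intros c _ Hexit Hrefuted.
    destruct (body_exit v psi (FMu v psi) E _ c (or_introl eq_refl) Hexit Hrefuted); auto.
  - intros pi Hexit HD. apply (mc_adam_inf_mu v psi pi Hsub Hexit).
    intros n. destruct (HD n) as [m [Hm [Em _]]]. exists m. split; [exact Hm|exact Em].
  - split; [reflexivity|exact Hs].
  - exact Hp.
Qed.

Lemma refutable_nu v psi : Sub phi (FNu v psi) -> refutable psi -> refutable (FNu v psi).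
Proof.
  intros Hsub IH E HE H Hp Hs.
  set (G := fun Q => pcompl T I (sem s0 T I psi (upd E v (pcompl T I Q)))).
  simpl in Hs. fold G in Hs.
  assert (HL : lfp T I G H) by (apply NNPP; intros Hn; apply Hs; split; assumption).
  assert (Hv : In v (binders phi)) by (eapply binds_in_binders; [exact Hsub|exists psi; auto]).
  apply adam_wins_eve_node; [intros [y [Ey _]]; discriminate|intros []|
    intros Hstuck; exfalso; apply Hstuck; eexists; apply mv_nu|].
  intros c1 Hmv. inversion Hmv; subst.
  set (Q0 := fun H' => is_proc T I H' /\
               adam_wins_until (H', FVar v) (free_var_exit (FNu v psi)) (refutes_var E)).
  enough (HQ0 : Q0 H) by exact (proj2 HQ0).
  apply (proj2 HL Q0); [intros H' [Hp' _]; exact Hp'|].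
  intros H' [Hp' Hns]. split; [exact Hp'|].
  apply adam_wins_eve_node; [intros [y [Ey Hy]]; injection Ey as <-; apply Hy; left; reflexivity
    |intros []|intros Hstuck; exfalso; apply Hstuck; eexists; apply mv_var; right; exact Hsub|].
  intros c' Hmv'. rewrite (unfold_move _ _ _ _ _ Hmv' Hsub (or_intror eq_refl)).
  apply adam_wins_then with (X1 := free_var_exit psi) (B1 := refutes_var (upd E v (pcompl T I Q0))).
  - exact Hp'.
  - apply IH; [apply agrees_off_binders_upd; assumption|exact Hp'|exact Hns].
  - intros c. exact (free_var_exit_body v psi _ c (or_intror eq_refl)).
  - intros [H'' f] Hp'' Hexit Hrefuted.
    destruct (body_exit v psi (FNu v psi) E _ _ (or_intror eq_refl) Hexit Hrefuted)
      as [[Ef HnQ0]|[Hexit' Hrefuted']].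
    + simpl in Ef, HnQ0. subst f. apply NNPP. intros Hn. apply HnQ0.
      split; [exact Hp''|]. intros [_ Hwin]. exact (Hn Hwin).
    + apply adam_wins_at_exit; assumption.
Qed.

Lemma refutable_Sub psi : Sub phi psi -> refutable psi.
Proof.
  induction psi; intros Hsub.
  - apply refutable_var.
  - exact (refutable_neg psi Hsub).
  - apply refutable_and; [exact Hsub|apply IHpsi1|apply IHpsi2]; eauto using Sub_trans, Sub.
  - apply refutable_or; [exact Hsub|apply IHpsi1|apply IHpsi2]; eauto using Sub_trans, Sub.
  - apply refutable_diac, IHpsi. eauto using Sub_trans, Sub.
  - apply refutable_boxc, IHpsi. eauto using Sub_trans, Sub.
  - apply refutable_dianc, IHpsi. eauto using Sub_trans, Sub.
  - apply refutable_boxnc, IHpsi. eauto using Sub_trans, Sub.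
  - apply refutable_diao, IHpsi. eauto using Sub_trans, Sub.
  - apply refutable_boxo, IHpsi. eauto using Sub_trans, Sub.
  - apply refutable_mu; [exact Hsub|apply IHpsi]. eauto using Sub_trans, Sub.
  - apply refutable_nu; [exact Hsub|apply IHpsi]. eauto using Sub_trans, Sub.
Qed.

End Refutation.

Theorem theorem6 (S L : Type) (s0 : S) (T : @trans S L -> Prop)
  (I : @trans S L -> @trans S L -> Prop) (V : @valuation S L) (phi : form L) :
  is_TSI T I -> image_finite T -> valuation_ok T I V ->
  TFL_formula phi -> PNF phi ->
  ~ sem s0 T I phi V (H0 s0 T) ->
  adam_wins_game s0 T I V phi (H0 s0 T).
Proof.
  intros _ _ _ Htfl Hpnf Hns.
  assert (Hp0 : is_proc T I (H0 s0 T)) by (split; [left; exists s0; intros t; tauto|exact Logic.I]).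
  apply (can_win_until_has_winning_strategy _ (H0 s0 T, phi) _ _ _ _ _
           (free_var_exit phi) (refutes_var V)).
  - exact (free_var_exit_stuck s0 T I phi).
  - intros [H f] [y [Ey _]] Hrefuted. simpl in Ey. subst f. exact (Hrefuted y eq_refl).
  - exact (refutable_Sub s0 T I V phi Htfl Hpnf phi (Sub_refl phi) V (fun _ _ => eq_refl)
             _ Hp0 Hns).
Qed.
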